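(* Let $\rho$ be a positive integer and $v$ an integer with $v \ge \frac{1}{2}(27\rho^2 - 3\rho + 60)$. Then every $(v,4)$-packing in which the maximum partial parallel class has size $\rho$ has at most \[ \frac{\rho v}{3} - \frac{\rho(\rho+1)}{6} \] blocks.
   Context: For integers $v \ge k \ge 2$, a $(v,k)$-packing is a pair $(X,\mathcal{B})$ where $X$ is a set of $v$ points and $\mathcal{B}$ is a set of $k$-subsets of $X$ (blocks) such that every pair of distinct points lies in at most one block. A partial parallel class (PPC) is a set of pairwise disjoint blocks; its size is the number of blocks. ''The maximum PPC has size $\rho$'' means the packing has a PPC of size $\rho$ but none of size $\rho+1$. *)

From mathcomp Require Import all_boot all_order all_algebra.
Set Implicit Arguments. Unset Strict Implicit. Unset Printing Implicit Defensive.

Definition is_packing (v k : nat) (B : {set {set 'I_v}}) : Prop :=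
  (forall b, b \in B -> #|b| = k) /\
  (forall x y : 'I_v, x != y ->
     #|[set b in B | (x \in b) && (y \in b)]| <= 1).

Definition is_PPC (v : nat) (B P : {set {set 'I_v}}) : Prop :=
  P \subset B /\
  (forall b1 b2, b1 \in P -> b2 \in P -> b1 != b2 -> [disjoint b1 & b2]).

Definition max_PPC_size (v : nat) (B : {set {set 'I_v}}) (rho : nat) : Prop :=
  (exists P, is_PPC B P /\ #|P| = rho) /\
  ~ (exists P, is_PPC B P /\ #|P| = rho.+1).

From mathcomp Require Import all_boot all_order all_algebra.
From mathcomp Require Import zify lra.
Import GRing.Theory Num.Theory.
Set Implicit Arguments. Unset Strict Implicit. Unset Printing Implicit Defensive.

(* Fix a maximum partial parallel class P and call a block local to p \in P when
   it meets the points covered by P only inside p.  Two local blocks of p always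
   meet, since otherwise exchanging p for them would enlarge P; so if no point of p
   is heavy (on more than 13 local blocks of p), p has at most 1 + 4 * 3 = 13 local
   blocks.  A greedy exchange shows that no block c meets only members of P that
   have a heavy point outside c; in particular each p has at most one heavy point.
   Let k members of P have a heavy point and s = rho - k not.  Blocks through heavy
   points number at most (2k(v-1) - k(k-1))/6, local blocks of light members at
   most 13s, and every other block meets a light member and, away from the heavy
   points, a second member of P, so it is determined by such a pair: at most
   12ks + 8s(s-1) blocks.  Summing up, 6|B| + rho(rho+1) <= 2kv + s(74k + 49s + 31),
   and the hypothesis on v bounds the last term by 2sv. *)

Lemma disjointP (T : finType) (A B : {set T}) :
  reflect (forall x, x \in A -> x \notin B) [disjoint A & B].
Proof.
apply: (iffP idP) => [AB x xA|AB]; first by rewrite (disjointFr AB xA).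
by apply/pred0P => x /=; case xA: (x \in A); rewrite // (negbTE (AB x xA)).
Qed.

Lemma meetP (T : finType) (A B : {set T}) :
  reflect (exists2 x, x \in A & x \in B) (~~ [disjoint A & B]).
Proof.
rewrite -setI_eq0; apply: (iffP (set0Pn _)) => [[x /setIP []]|[x xA xB]]; first by exists x.
by exists x; apply/setIP.
Qed.

Lemma card_dep_pairs (T1 T2 : finType) (A : {set T1}) (F : T1 -> {set T2}) :
  #|[set p : T1 * T2 | (p.1 \in A) && (p.2 \in F p.1)]| = \sum_(a in A) #|F a|.
Proof.
rewrite -sum1dep_card -(pair_big_dep (mem A) (fun a b => b \in F a) (fun _ _ => 1)) /=.
by apply: eq_bigr => a _; rewrite sum1_card.
Qed.

Lemma leq_card_bigcup (I T : finType) (J : {set I}) (F : I -> {set T}) :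
  #|\bigcup_(i in J) F i| <= \sum_(i in J) #|F i|.
Proof.
elim/big_rec2: _ => [|i n A _ leAn]; first by rewrite cards0.
by rewrite (leq_trans (leq_card_setU _ _).1) ?leq_add2l.
Qed.

Lemma card_asym_le_half (T : finType) (S W : {set T * T}) :
  S \subset W -> (forall x y, (x, y) \in W -> (y, x) \in W) ->
  (forall x y, (x, y) \in S -> (y, x) \notin S) -> 2 * #|S| <= #|W|.
Proof.
move=> sSW symW asymS; pose flip (p : T * T) := (p.2, p.1).
have flip_inj : injective flip by case=> a b [c d] [-> ->].
have disjS : [disjoint S & flip @: S].
  apply/disjointP => -[x y] xyS; apply/imsetP => -[[a b] abS [ex ey]]; subst x y.
  by rewrite (negbTE (asymS _ _ abS)) in xyS.
have sub : S :|: flip @: S \subset W.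
  apply/subsetP => p /setUP [/(subsetP sSW) //|/imsetP [[a b] /(subsetP sSW) abW ->]].
  exact: symW.
have := subset_leq_card sub.
by rewrite cardsU (disjoint_setI0 disjS) cards0 subn0 card_imset // addnn -mul2n.
Qed.

Lemma card_asym_union (T : finType) (I W O : {set T * T}) :
  I :|: W \subset O -> (forall x y, (x, y) \in W -> (y, x) \in W) ->
  (forall x y, (x, y) \in I :&: W -> (y, x) \notin I :&: W) ->
  2 * #|I| + #|W| <= 2 * #|O|.
Proof.
move=> sub symW asymIW; have := card_asym_le_half (subsetIr I W) symW asymIW.
have := subset_leq_card sub; rewrite cardsU.
by have := subset_leq_card (subsetIr I W); lia.
Qed.

Lemma linear_le_quadratic (r : nat) : 0 < r -> 74 * r + 6 <= 27 * r ^ 2 - 3 * r + 60.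
Proof. by case: r => [|[|[|r]]] // _; nia. Qed.

(* For [s > 0] the bound on [v] gives [2 v >= 74 (k + s) + 6 >= 74 k + 49 s + 31],
   which pays for the light members of the class. *)
Lemma packing_bound_arith k s v n a l c :
  n <= a + l + c -> 6 * a + k * (k - 1) <= 2 * (k * (v - 1)) -> l <= 13 * s ->
  c <= s * (12 * k + 8 * (s - 1)) ->
  0 < k + s -> 27 * (k + s) ^ 2 - 3 * (k + s) + 60 <= 2 * v ->
  6 * n + (k + s) * (k + s + 1) <= 2 * (k + s) * v.
Proof.
move=> le_n hb hl hc pos hv; have hv' := leq_trans (linear_le_quadratic pos) hv.
have sv : s * (74 * k + 49 * s + 31) <= s * (2 * v).
  have [->|s_pos] := posnP s; first by rewrite !mul0n.
  by rewrite leq_pmul2l //; lia.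
rewrite !mulnBr !muln1 in hb hc.
have : k <= k * k by clear -k; nia.
have : k <= k * v by clear -hv'; nia.
have : s <= s * s by clear -s; nia.
move: sv hc; rewrite !(mulnDr, mulnDl, mulnA) ![_ * s]mulnC; lia.
Qed.

Lemma is_PPCP v (B P : {set {set 'I_v}}) : is_PPC B P <-> P \subset B /\ trivIset P.
Proof. by split=> -[sPB tiP]; split=> //; [apply/trivIsetP | move/trivIsetP: tiP]. Qed.

Lemma card_PPC_le_max v (B : {set {set 'I_v}}) rho P :
  max_PPC_size B rho -> is_PPC B P -> #|P| <= rho.
Proof.
move=> [_ noPPC] [sPB tiP]; rewrite leqNgt; apply/negP => /card_geqP [s [uniq_s size_s sP]].
apply: noPPC; exists [set b in s]; split; last by rewrite cardsE (card_uniqP uniq_s).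
split=> [|b1 b2]; first by apply/subsetP => b; rewrite inE => /sP /(subsetP sPB).
by rewrite !inE => /sP b1P /sP; exact: tiP.
Qed.

Section Packing.

Variables (v : nat) (B : {set {set 'I_v}}).
Hypothesis packB : is_packing 4 B.

Lemma card_block b : b \in B -> #|b| = 4.
Proof. by case: packB => card4 _ /card4. Qed.

Lemma block_meets_self b : b \in B -> ~~ [disjoint b & b].
Proof. by move=> bB; rewrite -setI_eq0 setIid -card_gt0 card_block. Qed.

Lemma set0_notin_blocks (N : {set {set 'I_v}}) : N \subset B -> set0 \notin N.
Proof. by move=> sNB; apply/negP => /(subsetP sNB) /card_block; rewrite cards0. Qed.

Lemma card_blockD_le3 b (A : {set 'I_v}) : b \in B -> ~~ [disjoint b & A] -> #|b :\: A| <= 3.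
Proof.
move=> bB; rewrite -setI_eq0 -card_gt0 => bA.
by rewrite cardsD card_block //; lia.
Qed.

Lemma block_uniq b1 b2 x y : b1 \in B -> b2 \in B -> x != y ->
  x \in b1 -> y \in b1 -> x \in b2 -> y \in b2 -> b1 = b2.
Proof.
case: packB => _ pair_le1 b1B b2B xy xb1 yb1 xb2 yb2.
by apply: (card_le1_eqP (pair_le1 _ _ xy)); rewrite inE ?b1B ?b2B ?xb1 ?yb1 ?xb2 ?yb2.
Qed.

Definition pair_block (xy : 'I_v * 'I_v) :=
  odflt set0 [pick b in B | (xy.1 \in b) && (xy.2 \in b)].

Lemma pair_blockE b x y : b \in B -> x != y -> x \in b -> y \in b -> pair_block (x, y) = b.
Proof.
move=> bB xy xb yb; rewrite /pair_block; case: pickP => [b' /andP [b'B /andP [xb' yb']]|].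
  exact: block_uniq b'B bB xy xb' yb' xb yb.
by move/(_ b); rewrite bB xb yb.
Qed.

Lemma card_blocks_le_pairs (F : {set {set 'I_v}}) (S : {set 'I_v * 'I_v}) :
  F \subset B ->
  (forall b, b \in F -> exists2 xy, xy \in S & [&& xy.1 != xy.2, xy.1 \in b & xy.2 \in b]) ->
  #|F| <= #|S|.
Proof.
move=> sFB pairF; apply: leq_trans (leq_imset_card pair_block S).
apply/subset_leq_card/subsetP => b bF; have [[x y] xyS /and3P [xy xb yb]] := pairF b bF.
by apply/imsetP; exists (x, y); rewrite // (pair_blockE (subsetP sFB b bF) xy xb yb).
Qed.

Lemma exists_block_avoiding (F : {set {set 'I_v}}) h (X : {set 'I_v}) :
  F \subset B -> (forall b, b \in F -> h \in b) -> h \notin X -> #|X| < #|F| ->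
  exists2 b, b \in F & [disjoint b & X].
Proof.
move=> sFB hF hX ltXF; pose bad := [set b in F | ~~ [disjoint b & X]].
have : #|bad| <= #|[set (h, x) | x in X]|.
  apply: card_blocks_le_pairs => [|b].
    by apply: subset_trans sFB; apply/subsetP => b; rewrite inE => /andP [].
  rewrite inE => /andP [bF /meetP [x xb xX]]; exists (h, x); first exact: imset_f.
  rewrite /= xb (hF b bF) !andbT; by apply/negP => /eqP hx; rewrite hx xX in hX.
move=> le_bad; have /subsetPn [b bF] : ~~ (F \subset bad).
  apply: contraTN ltXF => /subset_leq_card le_F; rewrite -leqNgt.
  exact: leq_trans le_F (leq_trans le_bad (leq_imset_card _ _)).
by rewrite inE bF negbK; exists b.
Qed.

Variable P : {set {set 'I_v}}.
Hypothesis ppcP : is_PPC B P.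
Hypothesis maxP : forall P', is_PPC B P' -> #|P'| <= #|P|.

Let sPB : P \subset B. Proof. by case: ppcP. Qed.
Let tiP : trivIset P. Proof. by case/is_PPCP: ppcP. Qed.

Lemma PPC_block_uniq p p' x : p \in P -> p' \in P -> x \in p -> x \in p' -> p = p'.
Proof. by move=> pP p'P xp xp'; rewrite -(def_pblock tiP pP xp) (def_pblock tiP p'P xp'). Qed.

Lemma mem_cover p x : p \in P -> x \in p -> x \in cover P.
Proof. by move=> pP xp; apply/bigcupP; exists p. Qed.

Lemma card_cover_sub (Q : {set {set 'I_v}}) : Q \subset P -> #|cover Q| = 4 * #|Q|.
Proof.
move=> sQP; rewrite -(eqP (trivIsetS sQP tiP)) mulnC -sum_nat_const.
by apply: eq_bigr => q qQ; rewrite card_block // (subsetP sPB) ?(subsetP sQP).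
Qed.

Lemma ppc_exchange (Q M : {set {set 'I_v}}) :
  Q \subset P -> M \subset B -> trivIset M ->
  (forall d p, d \in M -> p \in P :\: Q -> [disjoint d & p]) -> #|M| <= #|Q|.
Proof.
move=> sQP sMB tiM disjMP.
have disj_cover : [disjoint cover M & cover (P :\: Q)].
  apply/bigcup_disjointP => p pPQ; rewrite disjoint_sym.
  by apply/bigcup_disjointP => d dM; rewrite disjoint_sym; apply: disjMP.
have disjM : [disjoint M & P :\: Q].
  apply/disjointP => d dM; apply: contraNN (block_meets_self (subsetP sMB d dM)).
  exact: disjMP.
have := maxP (P' := M :|: (P :\: Q)); rewrite is_PPCP.
rewrite subUset sMB (subset_trans (subsetDl _ _) sPB) trivIsetU ?trivIsetD //.
move=> /(_ (conj erefl erefl)).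
rewrite cardsU (disjoint_setI0 disjM) cards0 subn0 cardsD (setIidPr sQP).
by have := subset_leq_card sQP; clear; lia.
Qed.

Definition local (p : {set 'I_v}) := [set b in B | b :&: cover P \subset p].
Definition star (p : {set 'I_v}) (h : 'I_v) := [set b in local p | h \in b].
(* The threshold 13 is the bound of [card_local_light], and it lets
   [star_block_avoiding] dodge any 12 points outside [cover P]. *)
Definition heavy (p : {set 'I_v}) (h : 'I_v) := 13 < #|star p h|.

Lemma self_local p : p \in P -> p \in local p.
Proof. by move=> pP; rewrite inE (subsetP sPB) ?subsetIl. Qed.

Lemma local_disjoint p p' b : p \in P -> p' \in P -> p != p' -> b \in local p ->
  [disjoint b & p'].
Proof.
move=> pP p'P pp'; rewrite inE => /andP [_ /subsetP bp]; apply/disjointP => x xb.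
apply: contra pp' => xp'; apply/eqP/(PPC_block_uniq pP p'P _ xp').
by apply: bp; rewrite inE xb (mem_cover p'P).
Qed.

Lemma local_meet p b1 b2 : p \in P -> b1 \in local p -> b2 \in local p ->
  ~~ [disjoint b1 & b2].
Proof.
move=> pP b1p b2p; apply/negP => disj12.
have b1B : b1 \in B by case/setIdP: b1p.
have b2B : b2 \in B by case/setIdP: b2p.
have b12 : b1 != b2 by apply: contraNneq (block_meets_self b1B) => {2}->.
suff : #|[set b1; b2]| <= #|[set p]| by rewrite cards1 cards2 b12.
apply: ppc_exchange; first by rewrite sub1set.
- by apply/subsetP => d; rewrite !inE => /orP [] /eqP ->.
- apply/trivIsetP => d1 d2; rewrite !inE => /orP [] /eqP -> /orP [] /eqP ->;
    by rewrite ?eqxx // disjoint_sym.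
- move=> d p'; rewrite !inE => dM /andP [p'p p'P].
  by apply: (local_disjoint pP p'P); rewrite 1?eq_sym //; case/orP: dM => /eqP ->.
Qed.

Lemma local_trace p b h : p \in P -> b \in local p -> b != p -> h \in b -> h \in p ->
  b :&: cover P = [set h].
Proof.
move=> pP bp bp' hb hp.
apply/eqP; rewrite eqEsubset sub1set in_setI hb (mem_cover pP hp) !andbT.
apply/subsetP => x /setIP [xb xP]; rewrite inE.
case/setIdP: bp => bB /subsetP /(_ x); rewrite inE xb xP => /(_ isT) xp.
apply: contraR bp' => xh; apply/eqP.
exact: block_uniq bB (subsetP sPB p pP) xh xb hb xp hp.
Qed.

Lemma trace1_disjoint b h q q' : q \in P -> q' \in P -> q' != q -> h \in q ->
  b :&: cover P = [set h] -> [disjoint b & q'].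
Proof.
move=> qP q'P q'q hq trace; apply/disjointP => x xb; apply: contra q'q => xq'.
have : x \in b :&: cover P by rewrite inE xb (mem_cover q'P xq').
rewrite trace inE => /eqP ex; rewrite ex in xq'.
exact/eqP/(PPC_block_uniq q'P qP xq' hq).
Qed.

Lemma card_local_light p : p \in P -> (forall h, h \in p -> ~~ heavy p h) ->
  #|local p| <= 13.
Proof.
move=> pP light; have pB := subsetP sPB p pP.
case: (boolP [exists z in p, [forall b in local p, z \in b]]).
  case/exists_inP => z zp /forall_inP zall.
  have : #|local p| <= #|star p z|.
    by apply/subset_leq_card/subsetP => b bl; apply/setIdP; split; last exact: zall.
  by move/leq_trans; apply; rewrite leqNgt light.
move/exists_inPn => nostar.
pose avoid z := odflt p [pick c in local p | z \notin c].
have avoidP z : z \in p -> avoid z \in local p /\ z \notin avoid z.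
  move=> zp; rewrite /avoid; case: pickP => [c /andP [] //|none].
  have /forall_inPn [c cp zc] := nostar z zp.
  by have := none c; rewrite cp zc.
pose S := [set zw : 'I_v * 'I_v | (zw.1 \in p) && (zw.2 \in avoid zw.1 :\: p)].
have cardS : #|S| <= 12.
  rewrite (card_dep_pairs p (fun z => avoid z :\: p)); apply: (@leq_trans (\sum_(z in p) 3)).
    apply: leq_sum => z zp; have [zl _] := avoidP z zp.
    by apply: card_blockD_le3; [case/setIdP: zl | exact: local_meet pP zl (self_local pP)].
  by rewrite sum_nat_const card_block.
have : #|local p :\ p| <= #|S|.
  apply: card_blocks_le_pairs => [|b /setD1P [bp bl]].
    by apply/subsetP => b /setD1P [_ /setIdP []].
  have bB : b \in B by case/setIdP: bl.
  have [z zb zp] := meetP _ _ (local_meet pP bl (self_local pP)).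
  have [zl zc] := avoidP z zp.
  have [w wb wc] := meetP _ _ (local_meet pP bl zl).
  have zw : z != w by apply: contraNneq zc => {1}->.
  have wp : w \notin p by apply: contra bp => wp; apply/eqP/(block_uniq bB pB zw).
  by exists (z, w); rewrite ?inE /= ?zp ?wp ?wc ?zw ?zb ?wb.
by rewrite (cardsD1 p (local p)) self_local //; lia.
Qed.

Lemma star_block_avoiding q h (X : {set 'I_v}) :
  q \in P -> h \in q -> h \notin X -> heavy q h -> #|X :\: cover P| <= 12 ->
  exists2 b, b \in local q & b :&: cover P = [set h] /\ [disjoint b & X].
Proof.
move=> qP hq hX hv cardX.
have sFB : star q h :\ q \subset B by apply/subsetP => b /setD1P [_ /setIdP [/setIdP []]].
have [b /setD1P [bq /setIdP [bl hb]] disjb] :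
    exists2 b, b \in star q h :\ q & [disjoint b & X :\: cover P].
  apply: (exists_block_avoiding (h := h) sFB) => [b /setD1P [_ /setIdP []] //||].
    by rewrite inE (negbTE hX) andbF.
  move: hv; rewrite /heavy (cardsD1 q) inE self_local //= hq add1n ltnS.
  exact: leq_ltn_trans cardX.
have trace := local_trace qP bl bq hb hq.
exists b => //; split => //; apply/disjointP => x xb.
case xP: (x \in cover P).
  have : x \in b :&: cover P by rewrite inE xb xP.
  by rewrite trace inE => /eqP ->.
by have := disjointFr disjb xb; rewrite !inE xP /= => ->.
Qed.

(* Greedy choice: each chosen block adds its three points outside [cover P] to the
   forbidden set [X]; the budget 15 keeps the next choice within the 12 points a
   heavy star can dodge. *)
Lemma disjoint_star_blocks (Q : {set {set 'I_v}}) (X : {set 'I_v}) :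
  Q \subset P -> (forall q, q \in Q -> exists2 h, h \in q :\: X & heavy q h) ->
  #|X :\: cover P| + 3 * #|Q| <= 15 ->
  exists N : {set {set 'I_v}}, [/\ N \subset B, trivIset N, #|N| = #|Q| &
    forall d, d \in N -> [disjoint d & X] /\ exists2 q, q \in Q & d \in local q].
Proof.
move: {2}#|Q| (erefl #|Q|) => n; elim: n Q X => [|n IH] Q X cardQ sQP heavyQ cardX.
  exists set0; rewrite sub0set cards0; split=> // [|d]; last by rewrite inE.
  by apply/trivIsetP => d; rewrite inE.
have [q qQ] : exists q, q \in Q by apply/card_gt0P; rewrite cardQ.
have qP := subsetP sQP q qQ.
have [h /setDP [hq hX] hv] := heavyQ q qQ.
have [b bl [trace disjb]] := star_block_avoiding qP hq hX hv (ltac:(clear -cardX cardQ; lia)).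
have bB : b \in B by case/setIdP: bl.
have cardb : #|b :\: cover P| <= 3.
  have /setIP [hb hP] : h \in b :&: cover P by rewrite trace set11.
  by apply: card_blockD_le3 => //; apply/meetP; exists h.
have cardQ' : #|Q :\ q| = n by move: cardQ; rewrite (cardsD1 q) qQ => -[].
have sQ'P : Q :\ q \subset P by apply: subset_trans (subD1set _ _) sQP.
have heavyQ' q' : q' \in Q :\ q -> exists2 h', h' \in q' :\: (X :|: b) & heavy q' h'.
  case/setD1P => q'q q'Q; have q'P := subsetP sQP q' q'Q.
  have [h' /setDP [h'q' h'X] hv'] := heavyQ q' q'Q; exists h' => //.
  have h'b := disjointFl (trace1_disjoint qP q'P q'q hq trace) h'q'.
  by rewrite in_setD in_setU (negbTE h'X) h'b h'q'.
have cardX' : #|(X :|: b) :\: cover P| + 3 * #|Q :\ q| <= 15.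
  rewrite setDUl cardQ'; have := (leq_card_setU (X :\: cover P) (b :\: cover P)).1.
  by move: cardX; rewrite cardQ; clear -cardb; lia.
have [N [sNB tiN cardN propN]] := IH _ _ cardQ' sQ'P heavyQ' cardX'.
have [tibN bN] : trivIset (b |: N) /\ b \notin N.
  apply: trivIsetU1 (set0_notin_blocks sNB) => // d /propN [disjd _].
  by rewrite disjoint_sym; apply: disjointWr disjd; apply: subsetUr.
exists (b |: N); split=> //.
- by rewrite subUset sub1set bB.
- by rewrite cardsU1 bN cardN cardQ' cardQ add1n.
move=> d /setU1P [->|/propN [disjd [q' /setD1P [_ q'Q] dl]]]; first by split=> //; exists q.
by split; [apply: disjointWr disjd; apply: subsetUl | exists q'].
Qed.

Lemma not_all_meeting_heavy c : c \in B ->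
  ~ (forall p, p \in P -> ~~ [disjoint p & c] -> exists2 h, h \in p :\: c & heavy p h).
Proof.
move=> cB heavyc; pose Q := [set p in P | ~~ [disjoint p & c]].
have sQP : Q \subset P by apply/subsetP => p /setIdP [].
have cardQ : #|Q| <= #|c :&: cover P|.
  apply: leq_trans (leq_imset_card (pblock P) _); apply/subset_leq_card/subsetP.
  move=> p /setIdP [pP /meetP [x xp xc]]; apply/imsetP; exists x.
    by rewrite inE xc (mem_cover pP xp).
  by rewrite (def_pblock tiP pP xp).
have cardc : #|c :\: cover P| + 3 * #|Q| <= 15.
  suff : #|c :\: cover P| + #|Q| <= 4 by lia.
  by rewrite -(card_block cB) -(cardsID (cover P) c) addnC leq_add2r.
have heavyQ q : q \in Q -> exists2 h, h \in q :\: c & heavy q h.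
  by case/setIdP; apply: heavyc.
have [N [sNB tiN cardN propN]] := disjoint_star_blocks sQP heavyQ cardc.
have [ticN cN] : trivIset (c |: N) /\ c \notin N.
  apply: trivIsetU1 (set0_notin_blocks sNB) => // d /propN [disjd _].
  by rewrite disjoint_sym.
suff : #|c |: N| <= #|Q| by rewrite cardsU1 cN cardN add1n ltnn.
apply: ppc_exchange => //; first by rewrite subUset sub1set cB.
move=> d p /setU1P [->|/propN [_ [q qQ dl]]] /setDP [pP pQ].
  by rewrite disjoint_sym; move: pQ; rewrite inE pP negbK.
apply: local_disjoint (subsetP sQP q qQ) pP _ dl.
by apply: contraNneq pQ => <-.
Qed.

Lemma heavy_uniq p h h' : p \in P -> h \in p -> h' \in p -> heavy p h -> heavy p h' -> h = h'.
Proof.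
move=> pP hp h'p hv hv'; apply/eqP; apply: contraT => hh'.
have /card_gt0P [c /setD1P [cp /setIdP [cl h'c]]] : 0 < #|star p h' :\ p|.
  by move: hv'; rewrite /heavy (cardsD1 p); case: (p \in star p h') => /=; lia.
have cB : c \in B by case/setIdP: cl.
have hc : h \notin c.
  apply: contra cp => hc; apply/eqP.
  exact: block_uniq cB (subsetP sPB p pP) hh' hc h'c hp h'p.
exfalso; apply: (not_all_meeting_heavy cB) => p' p'P /meetP [x xp' xc].
have xp : x \in p.
  by case/setIdP: cl => _ /subsetP; apply; rewrite inE xc (mem_cover p'P xp').
by rewrite (PPC_block_uniq p'P pP xp' xp); exists h; rewrite // inE hc.
Qed.

Definition heavy_points := [set h | [exists p in P, (h \in p) && heavy p h]].
Definition light_blocks := [set p in P | [forall h in p, ~~ heavy p h]].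

Let sLP : light_blocks \subset P. Proof. by apply/subsetP => p /setIdP []. Qed.

Lemma heavy_pointsE (p : {set 'I_v}) h : p \in P -> h \in p -> (h \in heavy_points) = heavy p h.
Proof.
move=> pP hp; rewrite /heavy_points inE; apply/exists_inP/idP => [[p' p'P /andP [hp' hv]]|hv].
  by rewrite (PPC_block_uniq pP p'P hp hp').
by exists p; rewrite ?hp.
Qed.

Lemma heavy_notin_light (p : {set 'I_v}) h : h \in p -> heavy p h -> p \notin light_blocks.
Proof.
move=> hp hv; rewrite /light_blocks inE negb_and; apply/orP; right.
by apply/forall_inPn; exists h; rewrite ?negbK.
Qed.

Lemma heavy_points_sub : heavy_points \subset cover (P :\: light_blocks).
Proof.
apply/subsetP => h; rewrite /heavy_points inE => /exists_inP [p pP /andP [hp hv]].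
by apply/bigcupP; exists p; rewrite // inE pP (heavy_notin_light hp hv).
Qed.

Lemma card_heavy_points : #|heavy_points| = #|P :\: light_blocks|.
Proof.
have pblockH h : h \in heavy_points ->
    [/\ pblock P h \in P, h \in pblock P h & heavy (pblock P h) h].
  by rewrite /heavy_points inE => /exists_inP [p pP /andP [hp hv]]; rewrite (def_pblock tiP pP hp).
rewrite -(card_in_imset (f := pblock P)); last first.
  move=> h h' /pblockH [pP hp hv] /pblockH [_ h'p hv'] e; rewrite -e in h'p hv'.
  exact: heavy_uniq pP hp h'p hv hv'.
apply: eq_card => p; apply/imsetP/setDP => [[h /pblockH [pP hp hv] ->]|[pP]].
  by split; last exact: heavy_notin_light hp hv.
rewrite inE pP /= => /forall_inPn [h hp]; rewrite negbK => hv.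
by exists h; rewrite ?(heavy_pointsE pP hp) ?(def_pblock tiP pP hp).
Qed.

Lemma meet_light b : b \in B -> [disjoint b & heavy_points] ->
  exists2 p, p \in light_blocks & ~~ [disjoint p & b].
Proof.
move=> bB bH; case: (boolP [exists p in light_blocks, ~~ [disjoint p & b]]).
  by move/exists_inP.
move/exists_inPn => none; exfalso; apply: (not_all_meeting_heavy bB) => p pP pb.
have : p \notin light_blocks by apply: contraL pb => /none; rewrite negbK.
rewrite inE pP /= => /forall_inPn [h hp]; rewrite negbK => hv.
exists h => //; rewrite inE hp andbT; apply/negP => hb.
by have := disjointFr bH hb; rewrite (heavy_pointsE pP hp) hv.
Qed.

Definition heavy_blocks := [set b in B | ~~ [disjoint b & heavy_points]].

(* [x0] is only the default of the choice [c b] of a heavy point in each heavy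
   block [b].  Each such block yields the three pairs [(c b, x)], and a pair of
   heavy points lying in a common block is met in one orientation only. *)
Lemma card_heavy_blocks (x0 : 'I_v) :
  6 * #|heavy_blocks| + #|heavy_points| * (#|heavy_points| - 1)
    <= 2 * (#|heavy_points| * (v - 1)).
Proof.
pose c b := odflt x0 [pick h in b :&: heavy_points].
have cP b : b \in heavy_blocks -> c b \in b /\ c b \in heavy_points.
  case/setIdP => _ /meetP [h hb hH]; rewrite /c; case: pickP => [h' /setIP //|].
  by move/(_ h); rewrite inE hb hH.
pose Q := [set bx : {set 'I_v} * 'I_v | (bx.1 \in heavy_blocks) && (bx.2 \in bx.1 :\ c bx.1)].
have cardQ : #|Q| = #|heavy_blocks| * 3.
  rewrite (card_dep_pairs _ (fun b => b :\ c b)) -sum_nat_const.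
  apply: eq_bigr => b bH; have [cb _] := cP b bH.
  have /setIdP [/card_block] := bH; rewrite (cardsD1 (c b)) cb add1n => -[] //.
pose phi (bx : {set 'I_v} * 'I_v) := (c bx.1, bx.2).
have phi_inj : {in Q &, injective phi}.
  move=> [b x] [b' x'] /setIdP [/= bH /setD1P [xc xb]] /setIdP [/= b'H /setD1P [_ x'b']].
  case=> ecb exx'; subst x'; have [cb _] := cP b bH; have [cb' _] := cP b' b'H.
  rewrite ecb in xc cb; have /setIdP [bB _] := bH; have /setIdP [b'B _] := b'H.
  by rewrite (block_uniq bB b'B xc xb cb x'b' cb').
pose Off := [set hx : 'I_v * 'I_v | (hx.1 \in heavy_points) && (hx.2 \in [set~ hx.1])].
pose HH := [set hx : 'I_v * 'I_v | (hx.1 \in heavy_points) && (hx.2 \in heavy_points :\ hx.1)].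
have cardOff : #|Off| = #|heavy_points| * (v - 1).
  rewrite (card_dep_pairs _ (fun h => [set~ h])) -sum_nat_const.
  by apply: eq_bigr => h _; rewrite cardsC1 card_ord subn1.
have cardHH : #|HH| = #|heavy_points| * (#|heavy_points| - 1).
  rewrite (card_dep_pairs _ (fun h => heavy_points :\ h)) -sum_nat_const.
  by apply: eq_bigr => h hH; rewrite (cardsD1 h heavy_points) hH add1n subn1.
have sub : phi @: Q :|: HH \subset Off.
  apply/subsetP => hx /setUP [/imsetP [[b x] /setIdP [/= bH /setD1P [xc _]] ->]|].
    by have [_ cH] := cP b bH; rewrite in_set /= cH in_setC1 xc.
  by rewrite !inE => /andP [-> /andP [-> _]].
have symHH h y : (h, y) \in HH -> (y, h) \in HH.
  by rewrite !inE /= => /andP [hH /andP [yh yH]]; rewrite yH hH eq_sym yh.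
have asym h y : (h, y) \in phi @: Q :&: HH -> (y, h) \notin phi @: Q :&: HH.
  move=> /setIP [/imsetP [[b x] /setIdP [/= bH /setD1P [xc xb]] [eh ey]] _].
  apply/negP => /setIP [/imsetP [[b' x'] /setIdP [/= b'H /setD1P [_ x'b']] [ey' eh']] _].
  have [cb _] := cP b bH; have [cb' _] := cP b' b'H.
  have /setIdP [bB _] := bH; have /setIdP [b'B _] := b'H.
  subst h y; rewrite -eh' in x'b'; rewrite -ey' in cb'.
  have eb := block_uniq bB b'B xc xb cb cb' x'b'.
  by rewrite -eb in ey'; rewrite ey' eqxx in xc.
have := card_asym_union sub symHH asym.
by rewrite (card_in_imset phi_inj) cardQ cardOff cardHH; lia.
Qed.

Lemma card_light_local : #|\bigcup_(p in light_blocks) local p| <= 13 * #|light_blocks|.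
Proof.
rewrite mulnC -sum_nat_const; apply: leq_trans (leq_card_bigcup _ _) _.
by apply: leq_sum => p /setIdP [pP /forall_inP light]; apply: card_local_light.
Qed.

Definition crossing_blocks :=
  [set b in B | [disjoint b & heavy_points] && [forall p in light_blocks, b \notin local p]].

Lemma crossing_pair b : b \in crossing_blocks -> exists x y,
  [/\ x \in b, y \in b, x \in cover light_blocks, y \in cover P :\: heavy_points
    & y \notin pblock P x].
Proof.
case/setIdP => bB /andP [bH /forall_inP notlocal].
have [p pl /meetP [x xp xb]] := meet_light bB bH.
have pP : p \in P by case/setIdP: pl.
have /subsetPn [y /setIP [yb yP] yp] : ~~ (b :&: cover P \subset p).
  by have := notlocal p pl; rewrite inE bB.
exists x, y; split=> //; first by apply/bigcupP; exists p.
  by rewrite inE yP (disjointFr bH yb).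
by rewrite (def_pblock tiP pP xp).
Qed.

Definition cross_pairs := [set xy : 'I_v * 'I_v |
  (xy.1 \in cover light_blocks) && (xy.2 \in cover light_blocks :\: pblock P xy.1)].

Lemma card_cross_pairs :
  #|cross_pairs| = 4 * #|light_blocks| * (4 * #|light_blocks| - 4).
Proof.
rewrite (card_dep_pairs _ (fun x => cover light_blocks :\: pblock P x)).
rewrite -(card_cover_sub sLP) -sum_nat_const.
apply: eq_bigr => x /bigcupP [p pl xp]; have pP := subsetP sLP p pl.
rewrite (def_pblock tiP pP xp) cardsD (setIidPr (bigcup_sup p pl)).
by rewrite (card_block (subsetP sPB p pP)).
Qed.

Lemma light_cover_sub : cover light_blocks \subset cover P.
Proof. by apply/subsetP => x /bigcupP [p pl xp]; apply: mem_cover (subsetP sLP p pl) xp. Qed.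

Lemma cross_pairs_sym x y : (x, y) \in cross_pairs -> (y, x) \in cross_pairs.
Proof.
rewrite !inE /= => /and3P [xU ynx yU]; rewrite yU xU andbT /=.
rewrite -(eq_pblock x tiP (subsetP light_cover_sub _ yU)) eq_sym.
by rewrite (eq_pblock y tiP (subsetP light_cover_sub _ xU)).
Qed.

(* Pairs inside [cover light_blocks] are taken in increasing order, so that each
   unordered pair is counted once. *)
Lemma card_crossing : #|crossing_blocks| <=
  #|light_blocks| * (12 * #|heavy_points| + 8 * (#|light_blocks| - 1)).
Proof.
set Us := cover light_blocks.
pose T1 := setX Us (cover (P :\: light_blocks) :\: heavy_points).
pose T2 := [set xy in cross_pairs | xy.1 < xy.2].
have cardT1 : #|T1| = 4 * #|light_blocks| * (3 * #|heavy_points|).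
  rewrite cardsX cardsD (setIidPr heavy_points_sub) !card_cover_sub ?subsetDl //.
  by rewrite -card_heavy_points; congr (_ * _); lia.
have half : 2 * #|T2| <= #|cross_pairs|.
  apply: card_asym_le_half => [||x y]; first by apply/subsetP => xy /setIdP [].
    exact: cross_pairs_sym.
  by rewrite !inE /= => /andP [_ xy]; rewrite negb_and -leqNgt ltnW ?orbT.
have : #|crossing_blocks| <= #|T1 :|: T2|.
  apply: card_blocks_le_pairs => [|b /crossing_pair [x [y [xb yb xUs /setDP [yP yH] yx]]]].
    by apply/subsetP => b /setIdP [].
  have xy : x != y.
    by apply: contraNneq yx => <-; rewrite mem_pblock (subsetP light_cover_sub).
  case yUs: (y \in Us).
    have xyT2 : (x, y) \in cross_pairs by rewrite inE /= xUs inE yx yUs.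
    case: (ltngtP x y) => [lt|gt|/val_inj eq]; last by rewrite eq eqxx in xy.
      by exists (x, y); [apply/setUP; right; apply/setIdP | rewrite /= xy xb yb].
    exists (y, x); last by rewrite /= eq_sym xy xb yb.
    by apply/setUP; right; apply/setIdP; split; first exact: cross_pairs_sym.
  exists (x, y); last by rewrite /= xy xb yb.
  apply/setUP; left; apply/setXP; split=> //; rewrite inE yH /=.
  have yl : pblock P y \notin light_blocks.
    by apply: contraFN yUs => yl; apply/bigcupP; exists (pblock P y); rewrite // mem_pblock.
  by apply/bigcupP; exists (pblock P y); rewrite ?in_setD ?yl ?pblock_mem ?mem_pblock.
move/leq_trans/(_ (leq_card_setU T1 T2).1); rewrite cardT1.
move: half; rewrite card_cross_pairs.
move: #|crossing_blocks| #|T2| #|heavy_points| #|light_blocks| => c x k s; nia.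
Qed.

Lemma card_packing_le : 0 < #|P| -> 27 * #|P| ^ 2 - 3 * #|P| + 60 <= 2 * v ->
  6 * #|B| + #|P| * (#|P| + 1) <= 2 * #|P| * v.
Proof.
move=> P_gt0 hv; have /card_gt0P [p pP] := P_gt0.
have [x0 _] : exists x0, x0 \in p by apply/card_gt0P; rewrite card_block // (subsetP sPB).
have cardP : #|P| = #|heavy_points| + #|light_blocks|.
  by rewrite card_heavy_points cardsD (setIidPr sLP) subnK // subset_leq_card.
have sub : B \subset
    heavy_blocks :|: \bigcup_(q in light_blocks) local q :|: crossing_blocks.
  apply/subsetP => b bB; rewrite !in_setU.
  have [bH|bH] := boolP [disjoint b & heavy_points]; last first.
    by apply/orP; left; apply/orP; left; apply/setIdP.
  have [/exists_inP [q ql bl]|/exists_inPn nl] := boolP [exists q in light_blocks, b \in local q].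
    by apply/orP; left; apply/orP; right; apply/bigcupP; exists q.
  by apply/orP; right; apply/setIdP; split; last by rewrite bH; apply/forall_inP.
have cardB : #|B| <=
    #|heavy_blocks| + #|\bigcup_(q in light_blocks) local q| + #|crossing_blocks|.
  apply: leq_trans (subset_leq_card sub) _; apply: leq_trans (leq_card_setU _ _).1 _.
  by rewrite leq_add2r; apply: (leq_card_setU _ _).1.
rewrite cardP in P_gt0 hv *.
exact: packing_bound_arith cardB (card_heavy_blocks x0) card_light_local card_crossing P_gt0 hv.
Qed.

End Packing.

Theorem theorem3p22 (rho v : nat) (B : {set {set 'I_v}}) :
  0 < rho ->
  (27 * rho ^ 2 - 3 * rho + 60 <= 2 * v)%N ->
  is_packing 4 B ->
  max_PPC_size B rho ->
  (#|B|%:R <= (rho%:R * v%:R / 3 - rho%:R * (rho%:R + 1) / 6 : rat))%R.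
Proof.
move=> rho_gt0 hv packB maxB; have [[P [ppcP cardP]] _] := maxB.
have maxP P' : is_PPC B P' -> #|P'| <= #|P| by rewrite cardP; apply: card_PPC_le_max.
have := card_packing_le packB ppcP maxP; rewrite cardP => /(_ rho_gt0 hv).
rewrite -(ler_nat rat) !natrD !natrM; lra.
Qed.
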